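(* Let $q=2$, $0\le J\le\pi/4$, and $U(J)=\begin{pmatrix}e^{-iJ}&0&0&0\\0&0&-ie^{iJ}&0\\0&-ie^{iJ}&0&0\\0&0&0&e^{-iJ}\end{pmatrix}$ in the basis $|00\rangle,|01\rangle,|10\rangle,|11\rangle$, so that $e_p(U(J))=\frac23\cos^2(2J)$. For a single-qubit unitary $u$, let $\Lambda(u)$ be the largest modulus of the nontrivial eigenvalues of the map $a\mapsto u\,\mathcal{M}_+^{U(J)}(a)\,u^\dagger$. (i) Over the family $w(\theta,\psi)=\begin{pmatrix}\cos\frac\theta2&-e^{i\psi/2}\sin\frac\theta2\\ e^{-i\psi/2}\sin\frac\theta2&\cos\frac\theta2\end{pmatrix}$, $\theta\in[0,\pi]$, $\psi\in[0,4\pi]$, one has $\min_{\theta,\psi}\Lambda(w)=\sqrt{\sin 2J}$, i.e. $-\ln\min\Lambda=-\frac14\ln\bigl(1-\tfrac32 e_p(U(J))\bigr)$. (ii) Over the family $v(\phi,\psi)=\frac1{\sqrt2}\begin{pmatrix}e^{i\phi/2}&-e^{i\psi/2}\\ e^{-i\psi/2}&e^{-i\phi/2}\end{pmatrix}$, $\phi,\psi\in[0,4\pi]$, the nontrivial eigenvalues are the roots of $\lambda^3-(\lambda^2-\lambda)\cos\phi\,\sin 2J-\sin^2 2J=0$, and $\min_{\phi,\psi}\Lambda(v)=\sin^{2/3}(2J)$, attained at $\phi=\pi/2$; i.e. $-\ln\min\Lambda=-\frac13\ln\bigl(1-\tfrac32 e_p(U(J))\bigr)$.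
   Context: For a unitary $U$ on $\mathbb{C}^2\otimes\mathbb{C}^2$, $\mathcal{M}_+^U(a)=\frac12\operatorname{tr}_1[U^\dagger(a\otimes I)U]$ on $2\times2$ matrices; it fixes $I$ and preserves traceless matrices, and so does $a\mapsto u\mathcal{M}_+^U(a)u^\dagger$; the nontrivial eigenvalues of such a map are the three eigenvalues of its restriction to traceless matrices. (For $U(J)$ one has $\mathcal{M}_+^{U(J)}(a)=\begin{pmatrix}a_{00}&\sin(2J)a_{01}\\ \sin(2J)a_{10}&a_{11}\end{pmatrix}$.) The entangling power $e_p$ is $e_p(U)=\frac{E(U)+E(US)-E(S)}{E(S)}$ with $E(U)=1-q^{-4}\operatorname{tr}[(U^{R_1}U^{R_1\dagger})^2]$, $\langle\beta\alpha|U^{R_1}|ji\rangle=\langle i\alpha|U|j\beta\rangle$, $S$ the swap, $q=2$. *)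

(* R : realType (MathComp-Analysis), complex numbers R[i]
   from mathcomp-real-closed, 2-qubit operators as 'M[R[i]]_(2*2) with the
   tensor index of mxtens (|ij> <-> mxtens_index (i,j) = 2i+j). *)
From HB Require Import structures.
From mathcomp Require Import all_boot all_order all_algebra.
From mathcomp Require Import complex mxtens.
From mathcomp Require Import all_classical all_reals.
From mathcomp Require Import topology normedtype exp trigo.

Set Implicit Arguments.
Unset Strict Implicit.
Unset Printing Implicit Defensive.

Import Order.TTheory GRing.Theory Num.Theory.
Local Open Scope ring_scope.
Local Open Scope complex_scope.

Section QDefs.
Variable R : realType.
Local Notation C := R[i].

Definition expi (x : R) : C := cos x +i* sin x.

Definition dag m n (A : 'M[C]_(m, n)) : 'M[C]_(n, m) := map_mx conjc A^T.

Definition kid (i j : 'I_2) : 'I_(2 * 2) := mxtens_index (i, j).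

Definition UJ (J : R) : 'M[C]_(2 * 2) :=
  \matrix_(r < 2 * 2, c < 2 * 2)
    match val r, val c with
    | 0%N, 0%N => expi (- J)
    | 1%N, 2%N => - 'i * expi J
    | 2%N, 1%N => - 'i * expi J
    | 3%N, 3%N => expi (- J)
    | _, _ => 0
    end.

(* M_+^U(a) = 1/2 tr_1 [U^dagger (a (x) I) U] *)
Definition Mplus (U : 'M[C]_(2 * 2)) (a : 'M[C]_2) : 'M[C]_2 :=
  \matrix_(j < 2, l < 2)
    ((2%:R)^-1 * \sum_(i < 2) (dag U *m (a *t (1%:M : 'M[C]_2)) *m U) (kid i j) (kid i l)).

Definition Phi (u : 'M[C]_2) (U : 'M[C]_(2 * 2)) (a : 'M[C]_2) : 'M[C]_2 :=
  u *m Mplus U a *m dag u.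

(* nontrivial eigenvalues: eigenvalues of the restriction of f to the
   (f-invariant) subspace of traceless matrices *)
Definition nontriv_eig (f : 'M[C]_2 -> 'M[C]_2) (l : C) : Prop :=
  exists a : 'M[C]_2, a != 0 /\ \tr a = 0 /\ f a = l *: a.

Definition Lambda (f : 'M[C]_2 -> 'M[C]_2) : R :=
  sup [set x : R | exists l : C, nontriv_eig f l /\ x = Normc.normc l].

Definition wfam (theta psi : R) : 'M[C]_2 :=
  \matrix_(r < 2, c < 2)
    match val r, val c with
    | 0%N, 0%N => (cos (theta / 2))%:C
    | 0%N, 1%N => - expi (psi / 2) * (sin (theta / 2))%:C
    | 1%N, 0%N => expi (- (psi / 2)) * (sin (theta / 2))%:C
    | _, _ => (cos (theta / 2))%:C
    end.

Definition vfam (phi psi : R) : 'M[C]_2 :=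
  \matrix_(r < 2, c < 2)
    (((Num.sqrt 2)^-1)%:C *
    match val r, val c with
    | 0%N, 0%N => expi (phi / 2)
    | 0%N, 1%N => - expi (psi / 2)
    | 1%N, 0%N => expi (- (psi / 2))
    | _, _ => expi (- (phi / 2))
    end).

(* realignment: <beta alpha| U^{R_1} |j i> = <i alpha| U |j beta> *)
Definition realign (U : 'M[C]_(2 * 2)) : 'M[C]_(2 * 2) :=
  \matrix_(r < 2 * 2, c < 2 * 2)
    U (kid (mxtens_unindex c).2 (mxtens_unindex r).2)
      (kid (mxtens_unindex c).1 (mxtens_unindex r).1).

Definition swap2 : 'M[C]_(2 * 2) :=
  \matrix_(r < 2 * 2, c < 2 * 2)
    (((mxtens_unindex r).1 == (mxtens_unindex c).2) &&
     ((mxtens_unindex r).2 == (mxtens_unindex c).1))%:R.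

(* E(U) = 1 - q^{-4} tr[(U^{R1} U^{R1 dagger})^2], q = 2; the trace is real,
   we take its real part to get a real number *)
Definition Eop (U : 'M[C]_(2 * 2)) : R :=
  1 - (2%:R ^+ 4)^-1 * complex.Re (\tr ((realign U *m dag (realign U)) ^+ 2)).

Definition ep (U : 'M[C]_(2 * 2)) : R :=
  (Eop U + Eop (U *m swap2) - Eop swap2) / Eop swap2.

Definition is_min (S : set R) (m : R) : Prop :=
  S m /\ forall y, S y -> m <= y.

End QDefs.

(* Conjugation by a unitary u preserves traces, so a |-> u M_+(a) u^dagger acts on
   traceless matrices, as a 3x3 matrix in the coordinates (a00, a01, a10).  M_+^{U(J)}
   scales the off-diagonal entries by s = sin 2J, and for u = [[al, -be^*], [be, al^*]]
   with |al|^2 + |be|^2 = 1 the characteristic polynomial is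
     l^3 - (b + s a) l^2 + (s a + s^2 b) l - s^2,  a = al^2 + al^*^2,  b = |al|^2 - |be|^2.
   For w(theta, psi) it is (l - s)(l^2 - cos theta (1 + s) l + s): two eigenvalues have
   product s, so Lambda >= sqrt s, with equality at theta = pi/2 where they are
   +-i sqrt s.  For v(phi, psi) the eigenvalues have product s^2, so Lambda >= s^(2/3),
   with equality at phi = pi/2 where all are cube roots of s^2.  As for e_p: U(J) and S
   are unitary and fixed by realignment, and the realignment of U(J) S only has the
   corner entries e^{-iJ}, -i e^{iJ}, whence tr[(R R^dagger)^2] = 8 + 8 s^2. *)

From HB Require Import structures.
From mathcomp Require Import all_boot all_order all_algebra.
From mathcomp Require Import complex mxtens.
From mathcomp Require Import all_classical all_reals.
From mathcomp Require Import topology normedtype exp trigo.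
From mathcomp Require Import ring lra.
Import Order.TTheory GRing.Theory Num.Theory.
Local Open Scope ring_scope.
Local Open Scope classical_set_scope.
Local Open Scope complex_scope.

Set Implicit Arguments.
Unset Strict Implicit.
Unset Printing Implicit Defensive.

(* Otherwise [/=] unfolds them into real and imaginary parts, and the matrix
   entries below stop being ring expressions in e^{ix} and its conjugate. *)
Arguments expi : simpl never.
Arguments conjc : simpl never.

Section SmallMatrices.
Variable F : comPzRingType.

Definition mx2 (a b c d : F) : 'M[F]_2 :=
  \matrix_(i < 2, j < 2) match val i, val j with
    | 0%N, 0%N => a | 0%N, _ => b | _, 0%N => c | _, _ => d end.

Definition mx3 (a b c d e f g h k : F) : 'M[F]_3 :=
  \matrix_(i < 3, j < 3) match val i, val j with
    | 0%N, 0%N => a | 0%N, 1%N => b | 0%N, _ => c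
    | 1%N, 0%N => d | 1%N, 1%N => e | 1%N, _ => f
    | _, 0%N => g | _, 1%N => h | _, _ => k end.

Definition row3 (x y z : F) : 'rV[F]_3 :=
  \row_(j < 3) match val j with 0%N => x | 1%N => y | _ => z end.

Lemma mx2E (A : 'M[F]_2) : A = mx2 (A 0 0) (A 0 1) (A 1 0) (A 1 1).
Proof.
apply/matrixP => i j; rewrite mxE.
by case: i => [[|[|?]] ?]; case: j => [[|[|?]] ?] //=; congr (A _ _); apply: val_inj.
Qed.

Lemma row3E (v : 'rV[F]_3) : v = row3 (v 0 0) (v 0 1) (v 0 2).
Proof.
apply/matrixP => i j; rewrite mxE (ord1 i).
by case: j => [[|[|[|?]]] ?] //=; congr (v _ _); apply: val_inj.
Qed.

Lemma mx2_inj a b c d a' b' c' d' :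
  mx2 a b c d = mx2 a' b' c' d' -> [/\ a = a', b = b', c = c' & d = d'].
Proof.
move/matrixP => e; have := e 0 0; have := e 0 1; have := e 1 0; have := e 1 1.
by rewrite !mxE /= => -> -> -> ->.
Qed.

Lemma mxtrace_mx2 a b c d : \tr (mx2 a b c d) = a + d.
Proof. by rewrite /mxtrace !big_ord_recr big_ord0 /= !mxE /= add0r. Qed.

Lemma scale_mx2 l a b c d : l *: mx2 a b c d = mx2 (l * a) (l * b) (l * c) (l * d).
Proof. by apply/matrixP => i j; rewrite !mxE; case: i => [[|[|?]] ?]; case: j => [[|[|?]] ?]. Qed.

Lemma scale_row3 l x y z : l *: row3 x y z = row3 (l * x) (l * y) (l * z).
Proof. by apply/matrixP => i j; rewrite !mxE; case: j => [[|[|[|?]]] ?]. Qed.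

Lemma mul_mx2 a b c d a' b' c' d' :
  mx2 a b c d *m mx2 a' b' c' d' =
  mx2 (a * a' + b * c') (a * b' + b * d') (c * a' + d * c') (c * b' + d * d').
Proof.
apply/matrixP => i j; rewrite !mxE !big_ord_recr big_ord0 /= !mxE add0r.
by case: i => [[|[|?]] ?]; case: j => [[|[|?]] ?].
Qed.

Lemma mul_row3_mx3 x y z a b c d e f g h k :
  row3 x y z *m mx3 a b c d e f g h k =
  row3 (x * a + y * d + z * g) (x * b + y * e + z * h) (x * c + y * f + z * k).
Proof.
apply/matrixP => i j; rewrite !mxE !big_ord_recr big_ord0 /= !mxE add0r.
by case: j => [[|[|[|?]]] ?].
Qed.

Lemma mx3_subscalar a b c d e f g h k l :
  mx3 a b c d e f g h k - l%:M = mx3 (a - l) b c d (e - l) f g h (k - l).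
Proof.
apply/matrixP => i j; rewrite !mxE.
by case: i => [[|[|[|?]]] ?]; case: j => [[|[|[|?]]] ?] //=; rewrite subr0.
Qed.

Lemma det_mx3 a b c d e f g h k :
  \det (mx3 a b c d e f g h k) =
  a * (e * k - f * h) - b * (d * k - f * g) + c * (d * h - e * g).
Proof.
rewrite (expand_det_row _ 0) !big_ord_recr big_ord0 /= /cofactor.
rewrite !(expand_det_row _ 0) !big_ord_recr !big_ord0 /= /cofactor.
by rewrite !det_mx11 !mxE /= !expr0 !expr1; ring.
Qed.

Definition traceless_mx (v : 'rV[F]_3) : 'M[F]_2 := mx2 (v 0 0) (v 0 1) (v 0 2) (- v 0 0).

Lemma traceless_mx_row3 x y z : traceless_mx (row3 x y z) = mx2 x y z (- x).
Proof. by rewrite /traceless_mx !mxE. Qed.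

Lemma mxtrace_traceless_mx v : \tr (traceless_mx v) = 0.
Proof. by rewrite mxtrace_mx2 subrr. Qed.

Lemma traceless_mxZ l v : traceless_mx (l *: v) = l *: traceless_mx v.
Proof. by rewrite (row3E v) scale_row3 !traceless_mx_row3 scale_mx2 mulrN. Qed.

Lemma traceless_mx_inj : injective traceless_mx.
Proof.
move=> v w; rewrite [v]row3E [w]row3E !traceless_mx_row3.
by case/mx2_inj=> -> -> -> _.
Qed.

Lemma traceless_mx_eq0 v : (traceless_mx v == 0) = (v == 0).
Proof.
have <- : traceless_mx 0 = 0 by rewrite -(scale0r (0 : 'rV[F]_3)) traceless_mxZ scale0r.
exact: (inj_eq traceless_mx_inj).
Qed.

Lemma traceless_mxP (A : 'M[F]_2) :
  \tr A = 0 -> A = traceless_mx (row3 (A 0 0) (A 0 1) (A 1 0)).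
Proof.
rewrite traceless_mx_row3 => trA; rewrite {1}[A]mx2E; congr mx2.
by apply/eqP; rewrite -addr_eq0 addrC -(mxtrace_mx2 _ (A 0 1) (A 1 0)) -mx2E trA.
Qed.

(* The matrix, in the coordinates of [traceless_mx], of
   a |-> u (off-diagonal entries of a scaled by t) u', where u = [[al, -bc], [be, ac]]
   and u' = [[ac, bc], [-be, al]]; for ac = al^*, bc = be^* this is u^dagger. *)
Definition su2_action_mx (al ac be bc t : F) : 'M[F]_3 :=
  mx3 (al * ac - be * bc) (2 * al * bc) (2 * ac * be)
      (- t * al * be) (t * al ^+ 2) (- t * be ^+ 2)
      (- t * ac * bc) (- t * bc ^+ 2) (t * ac ^+ 2).

Lemma su2_action_mxP al ac be bc t (v : 'rV[F]_3) :
  mx2 al (- bc) be ac *m mx2 (v 0 0) (t * v 0 1) (t * v 0 2) (- v 0 0) *m mx2 ac bc (- be) al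
  = traceless_mx (v *m su2_action_mx al ac be bc t).
Proof.
rewrite [v]row3E /su2_action_mx mul_row3_mx3 traceless_mx_row3 !mxE /= !mul_mx2.
by congr mx2; ring.
Qed.

Lemma char_su2_action_mx al ac be bc t l : al * ac + be * bc = 1 ->
  \det (su2_action_mx al ac be bc t - l%:M) =
  - (l ^+ 3 - ((al * ac - be * bc) + t * (al ^+ 2 + ac ^+ 2)) * l ^+ 2
     + (t * (al ^+ 2 + ac ^+ 2) + t ^+ 2 * (al * ac - be * bc)) * l - t ^+ 2).
Proof.
move=> unit_al_be; rewrite mx3_subscalar det_mx3.
have ac_al : ac * al = 1 - be * bc by rewrite -unit_al_be mulrC addrK.
by ring: ac_al.
Qed.

End SmallMatrices.

Section ClosedFieldFactor.
Variable F : closedFieldType.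

Lemma quadratic_factor (b c : F) :
  exists y1 y2, [/\ y1 + y2 = - b, y1 * y2 = c &
    forall l, l ^+ 2 + b * l + c = (l - y1) * (l - y2)].
Proof.
have [y1 y1_root] := @solve_monicpoly F 2 (fun i => if i == 0%N then - c else - b) isT.
have {}y1_root : y1 ^+ 2 + b * y1 + c = 0.
  by move: y1_root; rewrite !big_ord_recr big_ord0 /= expr0 expr1 => ->; ring.
exists y1, (- b - y1); split => [||l]; first by ring.
  by apply/eqP; rewrite eq_sym -subr_eq0 -y1_root; apply/eqP; ring.
by apply/eqP; rewrite -subr_eq0 -y1_root; apply/eqP; ring.
Qed.

Lemma cubic_factor (c2 c1 c0 : F) :
  exists x1 x2 x3, x1 * x2 * x3 = - c0 /\
    forall l, l ^+ 3 + c2 * l ^+ 2 + c1 * l + c0 = (l - x1) * (l - x2) * (l - x3).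
Proof.
have [x1 x1_root] := @solve_monicpoly F 3
  (fun i => if i == 0%N then - c0 else if i == 1%N then - c1 else - c2) isT.
have {}x1_root : x1 ^+ 3 + c2 * x1 ^+ 2 + c1 * x1 + c0 = 0.
  by move: x1_root; rewrite !big_ord_recr big_ord0 /= expr0 expr1 => ->; ring.
have [x2 [x3 [_ _ factor23]]] := quadratic_factor (c2 + x1) (c1 + c2 * x1 + x1 ^+ 2).
have factor l : l ^+ 3 + c2 * l ^+ 2 + c1 * l + c0 = (l - x1) * (l - x2) * (l - x3).
  rewrite -mulrA -factor23; apply/eqP; rewrite -subr_eq0 -x1_root; apply/eqP; ring.
by exists x1, x2, x3; split => //; move: (factor 0); rewrite !expr0n /= !mulr0 !add0r => ->; ring.
Qed.

End ClosedFieldFactor.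

Section MaxBounds.
Variable R : realDomainType.

Lemma le_max2_of_sqr_eq (t a b : R) : 0 <= t -> 0 <= a -> 0 <= b ->
  t ^+ 2 = a * b -> t <= Num.max a b.
Proof.
move=> t0 a0 b0 tab; have m0 : 0 <= Num.max a b by rewrite le_max a0.
rewrite -(ler_pXn2r (isT : (0 < 2)%N)) ?nnegrE // tab expr2.
by apply: ler_pM; rewrite ?le_max ?lexx ?orbT.
Qed.

Lemma le_max3_of_cube_eq (t a b c : R) : 0 <= t -> 0 <= a -> 0 <= b -> 0 <= c ->
  t ^+ 3 = a * b * c -> t <= Num.max a (Num.max b c).
Proof.
move=> t0 a0 b0 c0 tabc; set m := Num.max a _.
have am : a <= m by rewrite le_max lexx.
have bm : b <= m by rewrite !le_max lexx orbT.
have cm : c <= m by rewrite !le_max lexx !orbT.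
have m0 : 0 <= m := le_trans a0 am.
rewrite -(ler_pXn2r (isT : (0 < 3)%N)) ?nnegrE // tabc 2!exprS expr1 mulrA.
by apply: ler_pM; rewrite ?mulr_ge0 //; apply: ler_pM.
Qed.

End MaxBounds.

Section RealAnalysis.
Variable R : realType.

Lemma sup_max (S : set R) (m : R) : S m -> ubound S m -> sup S = m.
Proof.
move=> Sm ubm; apply/eqP; rewrite eq_le ge_sup //; last by exists m.
by apply: ub_le_sup => //; exists m.
Qed.

Lemma powR_divnK (a : R) (m n : nat) : 0 <= a -> (0 < n)%N ->
  (a `^ (m%:R / n%:R)) ^+ n = a ^+ m.
Proof.
move=> a0 n0; rewrite -powR_mulrn ?powR_ge0 // -powRrM mulfVK ?powR_mulrn //.
by rewrite pnatr_eq0 -lt0n.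
Qed.

Lemma ln_powR_sqr (x r : R) : 0 <= x -> ln (x `^ r) = r / 2 * ln (x ^+ 2).
Proof. by move=> x0; rewrite ln_powR -powR_mulrn // ln_powR; field. Qed.

Lemma cos_half_sqr (x : R) : cos x = cos (x / 2) ^+ 2 - sin (x / 2) ^+ 2.
Proof.
have {1}-> : x = (x / 2) *+ 2 by rewrite mulr2n -splitr.
by rewrite cos_mulr2n sin2cos2 mulr2n; ring.
Qed.

End RealAnalysis.

Section ComplexNumbers.
Variable R : realType.
Local Notation C := R[i].
Local Notation normc := (@Normc.normc R).

Lemma conjcM (x y : C) : conjc (x * y) = conjc x * conjc y.
Proof. exact: rmorphM. Qed.

Lemma normc_ge0 (x : C) : 0 <= normc x.
Proof. by case: x => a b; exact: sqrtr_ge0. Qed.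

Lemma normc_real (r : R) : normc r%:C = `|r|.
Proof. by rewrite /Normc.normc /= expr0n /= addr0 sqrtr_sqr. Qed.

Lemma normcX (x : C) n : normc (x ^+ n) = normc x ^+ n.
Proof. by elim: n => [|n IHn]; rewrite ?Normc.normc1 // !exprS Normc.normcM IHn. Qed.

Lemma expi0 : expi 0 = 1 :> C.
Proof. by rewrite /expi cos0 sin0. Qed.

Lemma expiD (x y : R) : expi x * expi y = expi (x + y).
Proof.
rewrite /expi cosD sinD; apply/eqP; rewrite eq_complex /=.
by apply/andP; split; apply/eqP; ring.
Qed.

Lemma conjc_expi (x : R) : conjc (expi x) = expi (- x).
Proof. by rewrite /expi cosN sinN. Qed.

Lemma mul_conjc_expi (x : R) : expi x * conjc (expi x) = 1.
Proof. by rewrite conjc_expi expiD subrr expi0. Qed.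

Lemma expi_neq0 (x : R) : expi x != 0.
Proof.
by apply: contra_eq_neq (mul_conjc_expi x) => ->; rewrite mul0r eq_sym oner_neq0.
Qed.

Lemma conjc_expiV (x : R) : conjc (expi x) = (expi x)^-1.
Proof. by apply: (mulfI (expi_neq0 x)); rewrite mul_conjc_expi mulfV ?expi_neq0. Qed.

Lemma expi_addN (x : R) : expi x + expi (- x) = (2 * cos x)%:C.
Proof.
rewrite /expi cosN sinN; apply/eqP; rewrite eq_complex /=.
by apply/andP; split; apply/eqP; ring.
Qed.

Lemma mulNi_expi (x : R) : - 'i * expi x = expi (x - pi / 2).
Proof.
rewrite /expi cosBpihalf sinBpihalf -complexiE; apply/eqP; rewrite eq_complex /=.
by apply/andP; split; apply/eqP; ring.
Qed.

End ComplexNumbers.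

Section NontrivialEigenvalues.
Variable R : realType.
Local Notation C := R[i].
Local Notation normc := (@Normc.normc R).

Lemma nontriv_eig_det (f : 'M[C]_2 -> 'M[C]_2) (A : 'M[C]_3) :
  (forall v, f (traceless_mx v) = traceless_mx (v *m A)) ->
  forall l, nontriv_eig f l <-> \det (A - l%:M) = 0.
Proof.
move=> fA l; have eigenvectorE v :
    f (traceless_mx v) = l *: traceless_mx v <-> v *m (A - l%:M) = 0.
  rewrite fA -traceless_mxZ mulmxBr mul_mx_scalar.
  split => [/traceless_mx_inj -> | /eqP]; first exact: subrr.
  by rewrite subr_eq0 => /eqP ->.
split.
- case=> a [a0 [/traceless_mxP a_tl fa]]; move: a0 fa; rewrite {}a_tl.
  set v := row3 _ _ _; rewrite traceless_mx_eq0 => v0 /eigenvectorE vA.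
  by apply/eqP/det0P; exists v.
- move/eqP/det0P=> [v v0 /eigenvectorE vA]; exists (traceless_mx v).
  by rewrite traceless_mx_eq0 mxtrace_traceless_mx.
Qed.

Lemma Lambda_roots3 (f : 'M[C]_2 -> 'M[C]_2) (x1 x2 x3 : C) :
  (forall l, nontriv_eig f l <-> (l - x1) * (l - x2) * (l - x3) = 0) ->
  Lambda f = Num.max (normc x1) (Num.max (normc x2) (normc x3)).
Proof.
move=> eigf; apply: sup_max.
  have root k : (k == x1) || (k == x2) || (k == x3) ->
      exists l, nontriv_eig f l /\ normc k = normc l.
    move=> hk; exists k; split => //; rewrite eigf.
    by case/orP: hk => [/orP[]|] /eqP ->; rewrite subrr ?mulr0 ?mul0r.
  have max_cases (a b : R) : Num.max a b = a \/ Num.max a b = b.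
    by case: (leP a b) => [/max_idPr|/ltW/max_idPl]; [right | left].
  have [->|->] := max_cases (normc x1) (Num.max (normc x2) (normc x3)).
    by apply: root; rewrite eqxx.
  by have [->|->] := max_cases (normc x2) (normc x3); apply: root; rewrite eqxx ?orbT.
move=> y [l [/eigf/eqP]]; rewrite !mulf_eq0 !subr_eq0 => /orP[/orP[]|] /eqP -> ->;
  by rewrite !le_max lexx ?orbT.
Qed.

End NontrivialEigenvalues.

Section SU2Conjugation.
Variable R : realType.
Local Notation C := R[i].

Definition su2 (al be : C) : 'M[C]_2 := mx2 al (- conjc be) be (conjc al).

Lemma dag_su2 al be : dag (su2 al be) = mx2 (conjc al) (conjc be) (- be) al.
Proof.
apply/matrixP => i j; rewrite !mxE.
by case: i => [[|[|?]] ?]; case: j => [[|[|?]] ?]; rewrite //= -?(rmorphN conjc) conjcK.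
Qed.

Variable J : R.
Local Notation s := (sin (2 * J))%:C.

(* U(J) has e^{-iJ} on |00>, |11> and -i e^{iJ} = e^{i(J - pi/2)} on |01>, |10>;
   M_+ averages their products, which gives cos(2J - pi/2) = sin 2J. *)
Lemma UJ_sin :
  s = 2^-1 * ((expi (- J))^-1 * expi (J - pi / 2) + (expi (J - pi / 2))^-1 * expi (- J)).
Proof.
rewrite -!conjc_expiV !conjc_expi !expiD.
have -> : - - J + (J - pi / 2) = 2 * J - pi / 2 by ring.
have -> : - (J - pi / 2) + - J = - (2 * J - pi / 2) by ring.
by rewrite expi_addN cosBpihalf rmorphM rmorph_nat mulKf ?pnatr_eq0.
Qed.

Lemma Mplus_UJ a b c d : Mplus (UJ J) (mx2 a b c d) = mx2 a (s * b) (s * c) d.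
Proof.
apply/matrixP => i j; rewrite !mxE.
do 3!rewrite !big_ord_recr !big_ord0 /= !mxE.
case: i => [[|[|?]] ?]; case: j => [[|[|?]] ?] //=.
all: rewrite ?conjc0 ?mulNi_expi ?conjc_expiV ?UJ_sin.
all: by field; rewrite ?expi_neq0.
Qed.

Lemma Phi_su2 al be v : Phi (su2 al be) (UJ J) (traceless_mx v) =
  traceless_mx (v *m su2_action_mx al (conjc al) be (conjc be) s).
Proof. by rewrite /Phi [in Mplus _ _]/traceless_mx Mplus_UJ dag_su2 su2_action_mxP. Qed.

Lemma nontriv_eig_su2 al be l : al * conjc al + be * conjc be = 1 ->
  nontriv_eig (Phi (su2 al be) (UJ J)) l <->
  l ^+ 3 - ((al * conjc al - be * conjc be) + s * (al ^+ 2 + conjc al ^+ 2)) * l ^+ 2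
    + (s * (al ^+ 2 + conjc al ^+ 2) + s ^+ 2 * (al * conjc al - be * conjc be)) * l
    - s ^+ 2 = 0.
Proof.
move=> unit_al_be; rewrite (nontriv_eig_det (@Phi_su2 al be)) char_su2_action_mx //.
by split => [/eqP|->]; rewrite ?oppr0 // oppr_eq0 => /eqP.
Qed.

End SU2Conjugation.

Section Families.
Variable R : realType.

Section WFamily.
Variables th ps : R.
Local Notation al := (cos (th / 2))%:C.
Local Notation be := (expi (- (ps / 2)) * (sin (th / 2))%:C).

Lemma wfam_su2 : wfam th ps = su2 al be.
Proof.
rewrite /su2 conjcM conjc_expi !conjc_real opprK.
apply/matrixP => i j; rewrite !mxE.
by case: i => [[|[|?]] ?]; case: j => [[|[|?]] ?]; rewrite //=; exact: mulNr.
Qed.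

Lemma wfam_normsE :
  al * conjc al + be * conjc be = 1 /\ al * conjc al - be * conjc be = (cos th)%:C.
Proof.
rewrite conjcM !conjc_real mulrACA mul_conjc_expi mul1r -!rmorphM -rmorphD -rmorphB.
by rewrite -!expr2 cos2Dsin2 -cos_half_sqr.
Qed.

Lemma wfam_sqr_sum : al ^+ 2 + conjc al ^+ 2 = 1 + (cos th)%:C.
Proof.
rewrite conjc_real -rmorphXn -rmorphD -(rmorph1 (real_complex R)) -rmorphD.
by congr (_%:C); rewrite (cos_half_sqr th) sin2cos2; ring.
Qed.

End WFamily.

Section VFamily.
Variables ph ps : R.
Local Notation k := ((Num.sqrt (2 : R))^-1)%:C.
Local Notation al := (k * expi (ph / 2)).
Local Notation be := (k * expi (- (ps / 2))).

Lemma vfam_su2 : vfam ph ps = su2 al be.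
Proof.
rewrite /su2 !conjcM !conjc_expi !conjc_real opprK.
apply/matrixP => i j; rewrite !mxE.
by case: i => [[|[|?]] ?]; case: j => [[|[|?]] ?]; rewrite //=; exact: mulrN.
Qed.

Lemma sqr_k : k ^+ 2 = 2^-1.
Proof.
rewrite -rmorphXn exprVn sqr_sqrtr ?ler0n // rmorphV ?unitfE ?pnatr_eq0 //.
by rewrite rmorph_nat.
Qed.

Lemma vfam_normsE : al * conjc al + be * conjc be = 1 /\ al * conjc al - be * conjc be = 0.
Proof.
have k_expi x : k * expi x * conjc (k * expi x) = 2^-1.
  by rewrite conjcM conjc_real mulrACA mul_conjc_expi mulr1 -expr2 sqr_k.
by rewrite !k_expi subrr; split => //; field.
Qed.

Lemma vfam_sqr_sum : al ^+ 2 + conjc al ^+ 2 = (cos ph)%:C.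
Proof.
rewrite conjcM conjc_real conjc_expi !exprMn sqr_k -mulrDr !expr2 !expiD -opprD -splitr.
by rewrite expi_addN rmorphM rmorph_nat mulKf ?pnatr_eq0.
Qed.

End VFamily.

End Families.

Section Spectra.
Variables (R : realType) (J : R).
Local Notation C := R[i].
Local Notation s := (sin (2 * J))%:C.
Local Notation normc := (@Normc.normc R).

Lemma nontriv_eig_wfam th ps l :
  nontriv_eig (Phi (wfam th ps) (UJ J)) l <->
  (l - s) * (l ^+ 2 - (cos th)%:C * (1 + s) * l + s) = 0.
Proof.
have [unit_al_be diff] := wfam_normsE th ps.
rewrite wfam_su2 (nontriv_eig_su2 _ _ unit_al_be) diff wfam_sqr_sum.
by move: (cos th)%:C s => c t; split => eq0; rewrite -[RHS]eq0; ring.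
Qed.

Lemma nontriv_eig_vfam ph ps l :
  nontriv_eig (Phi (vfam ph ps) (UJ J)) l <->
  l ^+ 3 - (l ^+ 2 - l) * (cos ph * sin (2 * J))%:C - ((sin (2 * J)) ^+ 2)%:C = 0.
Proof.
have [unit_al_be diff] := vfam_normsE ph ps.
rewrite vfam_su2 (nontriv_eig_su2 _ _ unit_al_be) diff vfam_sqr_sum.
have -> : (cos ph * sin (2 * J))%:C = (cos ph)%:C * s by rewrite rmorphM.
have -> : (sin (2 * J) ^+ 2)%:C = s ^+ 2 by rewrite rmorphXn.
by move: (cos ph)%:C s => c t; split => eq0; rewrite -[RHS]eq0; ring.
Qed.

Lemma Lambda_wfam th ps : exists y1 y2 : C,
  [/\ y1 * y2 = s, y1 + y2 = (cos th)%:C * (1 + s) &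
   Lambda (Phi (wfam th ps) (UJ J)) = Num.max (normc s) (Num.max (normc y1) (normc y2))].
Proof.
have [y1 [y2 [sum prod factor]]] := quadratic_factor (- ((cos th)%:C * (1 + s))) s.
exists y1, y2; split => //; first by rewrite sum opprK.
by apply: Lambda_roots3 => l; rewrite nontriv_eig_wfam -mulNr factor mulrA.
Qed.

Lemma Lambda_vfam ph ps : exists x1 x2 x3 : C,
  [/\ x1 * x2 * x3 = ((sin (2 * J)) ^+ 2)%:C,
   forall l, (l - x1) * (l - x2) * (l - x3) =
     l ^+ 3 - (l ^+ 2 - l) * (cos ph * sin (2 * J))%:C - ((sin (2 * J)) ^+ 2)%:C &
   Lambda (Phi (vfam ph ps) (UJ J)) = Num.max (normc x1) (Num.max (normc x2) (normc x3))].
Proof.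
set k := (cos ph * sin (2 * J))%:C; set m := ((sin (2 * J)) ^+ 2)%:C.
have [x1 [x2 [x3 [prod factor]]]] := cubic_factor (- k) k (- m).
have factorE l : (l - x1) * (l - x2) * (l - x3) = l ^+ 3 - (l ^+ 2 - l) * k - m.
  by rewrite -factor; ring.
exists x1, x2, x3; split => //; first by rewrite prod opprK.
by apply: Lambda_roots3 => l; rewrite nontriv_eig_vfam factorE.
Qed.

End Spectra.

Section Minima.
Variables (R : realType) (J : R).
Hypothesis sin_ge0 : 0 <= sin (2 * J).
Local Notation normc := (@Normc.normc R).
Local Notation s := (sin (2 * J)).

Lemma Lambda_wfam_ge th ps : Num.sqrt s <= Lambda (Phi (wfam th ps) (UJ J)).
Proof.
have [y1 [y2 [prod _ ->]]] := Lambda_wfam J th ps.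
rewrite [leRHS]maxC le_max; apply/orP; left.
apply: le_max2_of_sqr_eq; rewrite ?normc_ge0 ?sqrtr_ge0 // sqr_sqrtr //.
by rewrite -Normc.normcM prod normc_real ger0_norm.
Qed.

Lemma Lambda_wfam_pihalf : s <= 1 -> Lambda (Phi (wfam (pi / 2) 0) (UJ J)) = Num.sqrt s.
Proof.
move=> s_le1; have [y1 [y2 [prod sum ->]]] := Lambda_wfam J (pi / 2) 0.
move: sum; rewrite cos_pihalf mul0r => /eqP; rewrite addrC addr_eq0 => /eqP y2E.
have ny1 : normc y1 = Num.sqrt s.
  apply: (pexpIrn (isT : (0 < 2)%N)); rewrite ?nnegrE ?normc_ge0 ?sqrtr_ge0 //.
  by rewrite sqr_sqrtr // -normcX expr2 -normcN -mulrN -y2E prod normc_real ger0_norm.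
rewrite y2E normcN ny1 maxxx normc_real ger0_norm //; apply/max_idPr.
rewrite -{1}(sqr_sqrtr sin_ge0) expr2 -[leRHS]mulr1 ler_wpM2l ?sqrtr_ge0 //.
by have := ler_wsqrtr s_le1; rewrite sqrtr1.
Qed.

Lemma Lambda_vfam_ge ph ps : s `^ (2 / 3) <= Lambda (Phi (vfam ph ps) (UJ J)).
Proof.
have [x1 [x2 [x3 [prod _ ->]]]] := Lambda_vfam J ph ps.
apply: le_max3_of_cube_eq; rewrite ?normc_ge0 ?powR_ge0 // powR_divnK //.
by rewrite -!Normc.normcM prod normc_real ger0_norm // exprn_ge0.
Qed.

Lemma Lambda_vfam_pihalf ps : Lambda (Phi (vfam (pi / 2) ps) (UJ J)) = s `^ (2 / 3).
Proof.
have [x1 [x2 [x3 [_ factor ->]]]] := Lambda_vfam J (pi / 2) ps.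
have root_normc x : (x - x1) * (x - x2) * (x - x3) = 0 -> normc x = s `^ (2 / 3).
  rewrite factor cos_pihalf mul0r mulr0 subr0 => /eqP; rewrite subr_eq0 => /eqP x3E.
  apply: (pexpIrn (isT : (0 < 3)%N)); rewrite ?nnegrE ?normc_ge0 ?powR_ge0 //.
  by rewrite powR_divnK // -normcX x3E normc_real ger0_norm // exprn_ge0.
by rewrite !root_normc ?maxxx // subrr ?mulr0 ?mul0r.
Qed.

End Minima.

Section EntanglingPower.
Variable R : realType.
Local Notation C := R[i].

Definition corner_mx (a b : C) : 'M[C]_(2 * 2) :=
  \matrix_(r < 2 * 2, c < 2 * 2)
    match val r, val c with
    | 0%N, 0%N | 3%N, 3%N => a
    | 0%N, 3%N | 3%N, 0%N => b
    | _, _ => 0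
    end.

Lemma dag_corner_mx a b : dag (corner_mx a b) = corner_mx (conjc a) (conjc b).
Proof.
apply/matrixP => i j; rewrite !mxE.
by case: i => [[|[|[|[|?]]]] ?]; case: j => [[|[|[|[|?]]]] ?]; rewrite //= ?conjc0.
Qed.

Lemma mul_corner_mx a b c d :
  corner_mx a b *m corner_mx c d = corner_mx (a * c + b * d) (a * d + b * c).
Proof.
apply/matrixP => i j; rewrite !mxE !big_ord_recr big_ord0 /= !mxE.
by case: i => [[|[|[|[|?]]]] ?]; case: j => [[|[|[|[|?]]]] ?]; rewrite //=; ring.
Qed.

Lemma mxtrace_corner_mx a b : \tr (corner_mx a b) = a *+ 2.
Proof. by rewrite /mxtrace !big_ord_recr big_ord0 /= !mxE /=; ring. Qed.

Lemma Eop_realign_unitary (U : 'M[C]_(2 * 2)) :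
  realign U *m dag (realign U) = 1%:M -> Eop U = 3 / 4.
Proof.
move=> unitary; rewrite /Eop unitary expr2 -mulmxE mulmx1 mxtrace1 /=.
by field.
Qed.

Lemma realign_UJ (J : R) : realign (UJ J) = UJ J.
Proof.
apply/matrixP => i j; rewrite !mxE.
by case: i => [[|[|[|[|?]]]] ?]; case: j => [[|[|[|[|?]]]] ?].
Qed.

Lemma realign_swap2 : realign (swap2 R) = swap2 R.
Proof.
apply/matrixP => i j; rewrite !mxE.
by case: i => [[|[|[|[|?]]]] ?]; case: j => [[|[|[|[|?]]]] ?].
Qed.

Lemma UJ_unitary (J : R) : UJ J *m dag (UJ J) = 1%:M.
Proof.
apply/matrixP => i j; rewrite !mxE !big_ord_recr big_ord0 /= !mxE /=.
case: i => [[|[|[|[|?]]]] ?]; case: j => [[|[|[|[|?]]]] ?] //=.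
all: by rewrite ?conjc0 ?mulNi_expi ?mul_conjc_expi; ring.
Qed.

Lemma swap2_unitary : swap2 R *m dag (swap2 R) = 1%:M.
Proof.
apply/matrixP => i j; rewrite !mxE !big_ord_recr big_ord0 /= !mxE /=.
by case: i => [[|[|[|[|?]]]] ?]; case: j => [[|[|[|[|?]]]] ?]; rewrite //= ?conjc0 ?conjc1; ring.
Qed.

Lemma realign_UJ_swap2 (J : R) :
  realign (UJ J *m swap2 R) = corner_mx (expi (- J)) (expi (J - pi / 2)).
Proof.
apply/matrixP => i j; rewrite !mxE !big_ord_recr big_ord0 /= !mxE /=.
by case: i => [[|[|[|[|?]]]] ?]; case: j => [[|[|[|[|?]]]] ?]; rewrite //= ?mulNi_expi; ring.
Qed.

Lemma Eop_UJ_swap2 (J : R) : Eop (UJ J *m swap2 R) = (1 - sin (2 * J) ^+ 2) / 2.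
Proof.
have overlap : expi (- J) * conjc (expi (J - pi / 2)) + expi (J - pi / 2) * conjc (expi (- J))
    = 2 * (sin (2 * J))%:C.
  by rewrite !conjc_expiV UJ_sin; field; rewrite ?expi_neq0.
rewrite /Eop realign_UJ_swap2 dag_corner_mx mul_corner_mx !mul_conjc_expi overlap.
by rewrite expr2 -mulmxE mul_corner_mx mxtrace_corner_mx /=; field.
Qed.

Lemma ep_UJ (J : R) : ep (UJ J) = 2 / 3 * cos (2 * J) ^+ 2.
Proof.
rewrite /ep Eop_UJ_swap2 !Eop_realign_unitary ?realign_UJ ?realign_swap2.
- by rewrite cos2sin2; field.
- exact: swap2_unitary.
- exact: UJ_unitary.
Qed.

End EntanglingPower.

Lemma is_min_param (R : realType) (A B : set R) (g : R -> R -> R) (m x0 y0 : R) :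
  A x0 -> B y0 -> g x0 y0 = m -> (forall x y, m <= g x y) ->
  is_min [set z | exists x y, A x /\ B y /\ z = g x y] m.
Proof. by move=> Ax0 By0 gm gem; split => [|_ [x [y [_ [_ ->]]]] //]; exists x0, y0. Qed.

Theorem mainTheorem10 (R : realType) (J : R) :
  0 <= J <= pi / 4%:R ->
  (* e_p(U(J)) = 2/3 cos^2(2J) *)
  ep (UJ J) = 2%:R / 3%:R * cos (2%:R * J) ^+ 2 /\
  (* (i) family w(theta, psi) *)
  (is_min [set y : R | exists theta psi : R,
              0 <= theta <= pi /\ 0 <= psi <= 4%:R * pi /\
              y = Lambda (Phi (wfam theta psi) (UJ J))]
          (Num.sqrt (sin (2%:R * J))) /\
   - ln (Num.sqrt (sin (2%:R * J)))
     = - (1 / 4%:R) * ln (1 - 3%:R / 2%:R * ep (UJ J))) /\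
  (* (ii) family v(phi, psi) *)
  ((forall phi psi : R, 0 <= phi <= 4%:R * pi -> 0 <= psi <= 4%:R * pi ->
     forall l : R[i],
       nontriv_eig (Phi (vfam phi psi) (UJ J)) l <->
       l ^+ 3 - (l ^+ 2 - l) * (cos phi * sin (2%:R * J))%:C
         - ((sin (2%:R * J)) ^+ 2)%:C = 0) /\
   is_min [set y : R | exists phi psi : R,
              0 <= phi <= 4%:R * pi /\ 0 <= psi <= 4%:R * pi /\
              y = Lambda (Phi (vfam phi psi) (UJ J))]
          (sin (2%:R * J) `^ (2%:R / 3%:R)) /\
   (forall psi : R, 0 <= psi <= 4%:R * pi ->
      Lambda (Phi (vfam (pi / 2%:R) psi) (UJ J)) = sin (2%:R * J) `^ (2%:R / 3%:R)) /\
   - ln (sin (2%:R * J) `^ (2%:R / 3%:R))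
     = - (1 / 3%:R) * ln (1 - 3%:R / 2%:R * ep (UJ J))).
Proof.
move=> /andP[J0 J1]; have pi0 := pi_ge0 R.
have s0 : 0 <= sin (2 * J) by apply: sin_ge0_pi; apply/andP; split; lra.
have in_range (x : R) : 0 <= x <= pi -> 0 <= x <= 4 * pi.
  by case/andP => ? ?; apply/andP; split; lra.
have pihalf_range : 0 <= (pi / 2 : R) <= pi by apply/andP; split; lra.
have zero_range : 0 <= (0 : R) <= 4 * pi by apply/andP; split; lra.
have ep_sin : 1 - 3 / 2 * ep (UJ J) = sin (2 * J) ^+ 2 by rewrite ep_UJ cos2sin2; field.
rewrite ep_sin -powR12_sqrt // !ln_powR_sqr //; split; first exact: ep_UJ.
split; first split.
- rewrite powR12_sqrt //; apply: (is_min_param pihalf_range zero_range).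
  + exact: Lambda_wfam_pihalf (sin_le1 _).
  + exact: Lambda_wfam_ge.
- by field.
split; first by move=> *; exact: nontriv_eig_vfam.
split; first apply: (is_min_param (in_range _ pihalf_range) zero_range).
- exact: Lambda_vfam_pihalf.
- exact: Lambda_vfam_ge.
split; first by move=> *; exact: Lambda_vfam_pihalf.
by field.
Qed.
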